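(* Consider a finite super-modular game with player set $\mathcal V$ and binary action sets $\{\pm1\}$. Then: (i) the maps $f^+,f^-,g^+,g^-:\mathcal X\to\mathcal X$ are monotone nondecreasing (i.e., $x\le y$ implies $f^\pm(x)\le f^\pm(y)$ and $g^\pm(x)\le g^\pm(y)$); (ii) a configuration $x$ is an equilibrium if and only if $f^+(x)=x=f^-(x)$; (iii) a configuration $x$ is a strict equilibrium if and only if $g^+(x)=x=g^-(x)$.
   Context: Game: finite player set $\mathcal V$, each player has action set $\{-1,+1\}$, configurations $x\in\mathcal X=\{-1,+1\}^{\mathcal V}$, utilities $u_i:\mathcal X\to\mathbb R$; write $u_i(x)=u_i(x_i,x_{-i})$. Best response: $\mathcal B_i(x_{-i})=\arg\max_{x_i\in\{\pm1\}}u_i(x_i,x_{-i})$. An equilibrium is $x^*$ with $x_i^*\in\mathcal B_i(x^*_{-i})$ for all $i$; it is strict if $\mathcal B_i(x^*_{-i})=\{x^*_i\}$ for all $i$. The game is super-modular if for every $i$, $u_i(1,x_{-i})-u_i(-1,x_{-i})\ge u_i(1,y_{-i})-u_i(-1,y_{-i})$ whenever $x_{-i}\ge y_{-i}$ (componentwise order). $\bigvee L,\bigwedge L$ denote entrywise max and min of a set $L$. Paths: a length-$l$ admissible path from $x$ to $y$ is $(x^{(0)},\dots,x^{(l)})$ with $x^{(0)}=x$, $x^{(l)}=y$, and for each $k$ a player $i_k$ with $x^{(k)}_{-i_k}=x^{(k-1)}_{-i_k}$ and $x^{(k)}_{i_k}\ne x^{(k-1)}_{i_k}$ (length $0$ allowed).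 It is an I-path if $u_{i_k}(x^{(k)})>u_{i_k}(x^{(k-1)})$ for all $k$, a BR-path if $u_{i_k}(x^{(k)})\ge u_{i_k}(x^{(k-1)})$ for all $k$; monotone if $x^{(0)}\lneq\cdots\lneq x^{(l)}$, anti-monotone if $x^{(0)}\gneq\cdots\gneq x^{(l)}$. Maps: $f^+(x)=\bigvee\{y: y$ reachable from $x$ by a monotone I-path$\}$, $f^-(x)=\bigwedge\{y: y$ reachable from $x$ by an anti-monotone I-path$\}$, $g^+(x)=\bigvee\{y: y$ reachable from $x$ by a monotone BR-path$\}$, $g^-(x)=\bigwedge\{y: y$ reachable from $x$ by an anti-monotone BR-path$\}$. *)

From HB Require Import structures.
From mathcomp Require Import all_boot all_order all_algebra.
From mathcomp Require Import reals.
Set Implicit Arguments. Unset Strict Implicit. Unset Printing Implicit Defensive.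
Import Order.TTheory GRing.Theory Num.Theory.
Local Open Scope ring_scope.

(* Action set {-1,+1} encoded by bool: false = -1, true = +1
   (so the order -1 < +1 is false < true). *)
Definition config (V : finType) := {ffun V -> bool}.

Section Game.
Variables (V : finType) (R : realType) (u : V -> config V -> R).

Definition cfg_le (x y : config V) : bool := [forall j, x j ==> y j].
Definition cfg_lt (x y : config V) : bool := cfg_le x y && (x != y).

Definition upd (x : config V) (i : V) (b : bool) : config V :=
  [ffun j => if j == i then b else x j].

Definition supermodular : Prop :=
  forall (i : V) (x y : config V),
    (forall j, j != i -> y j ==> x j) ->
    u i (upd y i true) - u i (upd y i false)
      <= u i (upd x i true) - u i (upd x i false).

Definition BR (i : V) (x : config V) : {set bool} :=
  [set b | [forall b' : bool, u i (upd x i b') <= u i (upd x i b)]].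

Definition equilibrium (x : config V) : Prop := forall i, x i \in BR i x.
Definition strict_equilibrium (x : config V) : Prop := forall i, BR i x = [set x i].

Definition adm_step (i : V) (a b : config V) : bool :=
  [forall j, (j != i) ==> (b j == a j)] && (b i != a i).

Definition I_step (a b : config V) : bool :=
  [exists i, adm_step i a b && (u i a < u i b)].
Definition BR_step (a b : config V) : bool :=
  [exists i, adm_step i a b && (u i a <= u i b)].

(* reachability by paths (of any length >= 0): connect is the
   reflexive-transitive closure, i.e. existence of a path in the relation *)
Definition mono_I_reach (x y : config V) : bool :=
  connect (fun a b => I_step a b && cfg_lt a b) x y.
Definition anti_I_reach (x y : config V) : bool :=
  connect (fun a b => I_step a b && cfg_lt b a) x y.
Definition mono_BR_reach (x y : config V) : bool :=
  connect (fun a b => BR_step a b && cfg_lt a b) x y.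
Definition anti_BR_reach (x y : config V) : bool :=
  connect (fun a b => BR_step a b && cfg_lt b a) x y.

Definition cfg_join (L : pred (config V)) : config V :=
  [ffun i => [exists y, L y && y i]].
Definition cfg_meet (L : pred (config V)) : config V :=
  [ffun i => [forall y, L y ==> y i]].

Definition f_plus (x : config V) := cfg_join (mono_I_reach x).
Definition f_minus (x : config V) := cfg_meet (anti_I_reach x).
Definition g_plus (x : config V) := cfg_join (mono_BR_reach x).
Definition g_minus (x : config V) := cfg_meet (anti_BR_reach x).

End Game.

From HB Require Import structures.
From mathcomp Require Import all_boot all_order all_algebra.
From mathcomp Require Import reals.
From mathcomp Require Import lra.
Set Implicit Arguments. Unset Strict Implicit. Unset Printing Implicit Defensive.
Import Order.TTheory GRing.Theory Num.Theory.
Local Open Scope ring_scope.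

(* I-paths and BR-paths differ only in the comparison used for a step
   (strict vs. weak improvement), so everything is proved once for a
   generic comparison [r] that is "gain monotone": if r a b holds and the
   gain d - c is at least b - a, then r c d holds.  Both < and <= qualify.

   A monotone step turns exactly one player from -1 to +1, an anti-monotone
   step one player from +1 to -1.  Super-modularity says that the gain of
   switching up grows with the opponents' configuration; hence a monotone
   r-path from x can be shadowed from any y >= x by a path ending above it
   (and dually for anti-monotone paths).  This gives monotonicity (i).
   For (ii)/(iii), join(reach x) = x = meet(reach x) holds exactly when x
   has no r-improving unilateral deviation at all, which for r = < is the
   equilibrium condition and for r = <= the strict-equilibrium condition. *)

Section Updates.
Variable V : finType.

Lemma updE (x : config V) i b j : upd x i b j = if j == i then b else x j.
Proof. by rewrite ffunE. Qed.

Lemma upd_id (x : config V) i : upd x i (x i) = x.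
Proof. by apply/ffunP=> j; rewrite updE; case: eqP => // ->. Qed.

Lemma upd_same (x : config V) i b : x i = b -> upd x i b = x.
Proof. by move<-; exact: upd_id. Qed.

Lemma cfg_le_refl (x : config V) : cfg_le x x.
Proof. by apply/forallP=> j; rewrite implybb. Qed.

Lemma le_upd (x y : config V) i b : cfg_le x y -> cfg_le (upd x i b) (upd y i b).
Proof.
move=> /forallP lexy; apply/forallP=> j; rewrite !updE.
by case: (j == i); [rewrite implybb | exact: lexy].
Qed.

Lemma le_updl (x y : config V) i b :
  cfg_le x y -> (b ==> y i) -> cfg_le (upd x i b) y.
Proof.
move=> /forallP lexy hb; apply/forallP=> j; rewrite updE.
by case: eqP => [->|_]; [exact: hb | exact: lexy].
Qed.

Lemma le_updr (x y : config V) i b :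
  cfg_le x y -> (x i ==> b) -> cfg_le x (upd y i b).
Proof.
move=> /forallP lexy hb; apply/forallP=> j; rewrite updE.
by case: eqP => [->|_]; [exact: hb | exact: lexy].
Qed.

Lemma adm_flip (x : config V) i : adm_step i x (upd x i (~~ x i)).
Proof.
apply/andP; split; last by rewrite updE eqxx; case: (x i).
by apply/forallP=> j; apply/implyP=> nj; rewrite updE (negbTE nj).
Qed.

Lemma adm_stepE (a b : config V) i : adm_step i a b -> b = upd a i (~~ a i).
Proof.
case/andP=> /forallP same bi; apply/ffunP=> j; rewrite updE.
case: eqP => [->|/eqP nj]; first by move: bi; case: (b i); case: (a i).
exact/eqP/(implyP (same j) nj).
Qed.

End Updates.

Section GenericPaths.
Variables (V : finType) (R : realType) (u : V -> config V -> R).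
Hypothesis hsm : supermodular u.
Variable r : R -> R -> bool.
Hypothesis r_gain : forall a b c d, r a b -> b - a <= d - c -> r c d.

Definition improve (a b : config V) : bool :=
  [exists i, adm_step i a b && r (u i a) (u i b)].
Definition up_step (a b : config V) := improve a b && cfg_lt a b.
Definition down_step (a b : config V) := improve a b && cfg_lt b a.

Definition gain (i : V) (x : config V) : R :=
  u i (upd x i true) - u i (upd x i false).

Lemma gain_mono i (x y : config V) : cfg_le x y -> gain i x <= gain i y.
Proof. by move=> lexy; apply: hsm => j _; exact: (forallP lexy j). Qed.

Lemma up_stepP (a b : config V) :
  reflect (exists2 i, a i = false & b = upd a i true /\ r (u i a) (u i b))
          (up_step a b).
Proof.
apply: (iffP andP) => [[/existsP [i /andP [adm hr]] /andP [/forallP le _]]|].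
  have eb := adm_stepE adm.
  have ai : a i = false by move: (le i); rewrite eb updE eqxx; case: (a i).
  by rewrite ai in eb; exists i.
move=> [i ai [eb hr]]; have adm := adm_flip a i; rewrite ai /= -eb in adm.
split; first by apply/existsP; exists i; rewrite adm.
rewrite /cfg_lt eb le_updr ?cfg_le_refl ?ai //=.
by apply/eqP=> /ffunP /(_ i); rewrite updE eqxx ai.
Qed.

Lemma down_stepP (a b : config V) :
  reflect (exists2 i, a i = true & b = upd a i false /\ r (u i a) (u i b))
          (down_step a b).
Proof.
apply: (iffP andP) => [[/existsP [i /andP [adm hr]] /andP [/forallP le _]]|].
  have eb := adm_stepE adm.
  have ai : a i = true by move: (le i); rewrite eb updE eqxx; case: (a i).
  by rewrite ai in eb; exists i.
move=> [i ai [eb hr]]; have adm := adm_flip a i; rewrite ai /= -eb in adm.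
split; first by apply/existsP; exists i; rewrite adm.
rewrite /cfg_lt eb le_updl ?cfg_le_refl ?ai //=.
by apply/eqP=> /ffunP /(_ i); rewrite updE eqxx ai.
Qed.

Lemma up_improve_mono i (x y : config V) : cfg_le x y ->
  x i = false -> y i = false ->
  r (u i x) (u i (upd x i true)) -> r (u i y) (u i (upd y i true)).
Proof.
move=> lexy xi yi hr; apply: (r_gain hr).
by have := gain_mono i lexy; rewrite /gain (upd_same xi) (upd_same yi).
Qed.

Lemma down_improve_mono i (x y : config V) : cfg_le x y ->
  x i = true -> y i = true ->
  r (u i y) (u i (upd y i false)) -> r (u i x) (u i (upd x i false)).
Proof.
move=> lexy xi yi hr; apply: (r_gain hr).
have := gain_mono i lexy; rewrite /gain (upd_same xi) (upd_same yi).
lra.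
Qed.

Lemma up_sim (x y w : config V) : cfg_le x y -> connect up_step x w ->
  exists2 w', connect up_step y w' & cfg_le w w'.
Proof.
move=> lexy /connectP [p]; elim: p x y lexy => [|a p IH] x y lexy /=.
  by move=> _ ->; exists y.
case/andP=> /up_stepP [i xi [-> hr]] pth ew.
case yi: (y i).
  by apply: (IH (upd x i true) y) => //; apply: le_updl; rewrite ?yi.
have st : up_step y (upd y i true).
  by apply/up_stepP; exists i => //; split; last exact: (up_improve_mono lexy xi yi hr).
have [w' c le] := IH _ _ (le_upd i true lexy) pth ew.
by exists w' => //; exact: connect_trans (connect1 st) c.
Qed.

Lemma down_sim (x y w : config V) : cfg_le x y -> connect down_step y w ->
  exists2 w', connect down_step x w' & cfg_le w' w.
Proof.
move=> lexy /connectP [p]; elim: p x y lexy => [|a p IH] x y lexy /=.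
  by move=> _ ->; exists x.
case/andP=> /down_stepP [i yi [-> hr]] pth ew.
case xi: (x i); last first.
  by apply: (IH x (upd y i false)) => //; apply: le_updr; rewrite ?xi.
have st : down_step x (upd x i false).
  by apply/down_stepP; exists i => //; split; last exact: (down_improve_mono lexy xi yi hr).
have [w' c le] := IH _ _ (le_upd i false lexy) pth ew.
by exists w' => //; exact: connect_trans (connect1 st) c.
Qed.

Lemma join_mono (x y : config V) : cfg_le x y ->
  cfg_le (cfg_join (connect up_step x)) (cfg_join (connect up_step y)).
Proof.
move=> lexy; apply/forallP=> j; rewrite !ffunE; apply/implyP.
case/existsP=> w /andP [c wj]; have [w' c' le] := up_sim lexy c.
by apply/existsP; exists w'; rewrite c' (implyP (forallP le j) wj).
Qed.

Lemma meet_mono (x y : config V) : cfg_le x y ->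
  cfg_le (cfg_meet (connect down_step x)) (cfg_meet (connect down_step y)).
Proof.
move=> lexy; apply/forallP=> j; rewrite !ffunE; apply/implyP=> /forallP H.
apply/forallP=> w; apply/implyP=> c; have [w' c' le] := down_sim lexy c.
exact: (implyP (forallP le j) (implyP (H w') c')).
Qed.

Lemma join_fixedP (x : config V) :
  cfg_join (connect up_step x) = x <->
  forall i, x i = false -> ~~ r (u i x) (u i (upd x i true)).
Proof.
split=> [hj i xi | H].
  apply/negP=> hr; have st : up_step x (upd x i true) by apply/up_stepP; exists i.
  move/ffunP/(_ i): hj; rewrite ffunE xi => /negbT /existsPn /(_ (upd x i true)).
  by rewrite connect1 // updE eqxx.
have stuck w : connect up_step x w -> w = x.
  case/connectP=> [[|a p] /= pth ->] //; case/andP: pth => /up_stepP [i xi [-> hr]].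
  by move: (H i xi); rewrite hr.
apply/ffunP=> j; rewrite ffunE; apply/existsP/idP => [[w /andP [/stuck -> //]]|xj].
by exists x; rewrite connect0.
Qed.

Lemma meet_fixedP (x : config V) :
  x = cfg_meet (connect down_step x) <->
  forall i, x i = true -> ~~ r (u i x) (u i (upd x i false)).
Proof.
split=> [hm i xi | H].
  apply/negP=> hr; have st : down_step x (upd x i false).
    by apply/down_stepP; exists i.
  move/ffunP/(_ i): hm; rewrite ffunE xi => /esym /forallP /(_ (upd x i false)).
  by rewrite connect1 // updE eqxx.
have stuck w : connect down_step x w -> w = x.
  case/connectP=> [[|a p] /= pth ->] //; case/andP: pth => /down_stepP [i xi [-> hr]].
  by move: (H i xi); rewrite hr.
apply/ffunP=> j; rewrite ffunE; apply/idP/forallP => [xj w|/(_ x)].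
  by apply/implyP=> /stuck ->.
by rewrite connect0.
Qed.

Lemma fixed_no_deviation (x : config V) :
  (cfg_join (connect up_step x) = x /\ x = cfg_meet (connect down_step x)) <->
  forall i, ~~ r (u i x) (u i (upd x i (~~ x i))).
Proof.
rewrite join_fixedP meet_fixedP; split=> [[Hup Hdown] i | H].
  by case xi: (x i); [exact: Hdown | exact: Hup].
by split=> i xi; have := H i; rewrite xi.
Qed.

End GenericPaths.

Section BestResponse.
Variables (V : finType) (R : realType) (u : V -> config V -> R).

Lemma best_responseE i (x : config V) b :
  (b \in BR u i x) = (u i (upd x i (~~ b)) <= u i (upd x i b)).
Proof.
rewrite inE; apply/forallP/idP => [/(_ (~~ b)) //|hle b'].
by case: b' b hle => -[].
Qed.

Lemma equilibriumP (x : config V) :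
  equilibrium u x <-> forall i, ~~ (u i x < u i (upd x i (~~ x i))).
Proof.
by split=> H i; have := H i; rewrite best_responseE upd_id -leNgt.
Qed.

(* Strict equilibrium: every flip is a strict loss, since the binary
   best-response set is {x i} exactly when ~~ x i is not in it. *)
Lemma strict_equilibriumP (x : config V) :
  strict_equilibrium u x <-> forall i, ~~ (u i x <= u i (upd x i (~~ x i))).
Proof.
have notBR i : (~~ x i \in BR u i x) = (u i x <= u i (upd x i (~~ x i))).
  by rewrite best_responseE negbK upd_id.
split=> H i.
  by rewrite -notBR (H i) inE; case: (x i).
have xBR : x i \in BR u i x.
  by rewrite best_responseE upd_id ltW // ltNge; exact: H.
apply/setP=> b; rewrite in_set1; have [-> // | neb] := eqVneq b (x i).
have -> : b = ~~ x i by move: neb; case: b; case: (x i).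
by rewrite notBR; exact/negbTE/H.
Qed.

End BestResponse.

Lemma lt_gain (R : realType) (a b c d : R) : a < b -> b - a <= d - c -> c < d.
Proof. by move=> *; lra. Qed.

Lemma le_gain (R : realType) (a b c d : R) : a <= b -> b - a <= d - c -> c <= d.
Proof. by move=> *; lra. Qed.

Theorem lemma6 (V : finType) (R : realType) (u : V -> config V -> R)
    (hsm : supermodular u) :
  (forall x y : config V, cfg_le x y ->
     [/\ cfg_le (f_plus u x) (f_plus u y),
         cfg_le (f_minus u x) (f_minus u y),
         cfg_le (g_plus u x) (g_plus u y) &
         cfg_le (g_minus u x) (g_minus u y)]) /\
  (forall x : config V, equilibrium u x <-> (f_plus u x = x /\ x = f_minus u x)) /\
  (forall x : config V,
     strict_equilibrium u x <-> (g_plus u x = x /\ x = g_minus u x)).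
Proof.
split; [|split] => [x y lexy|x|x].
- split.
  + exact: (join_mono hsm (@lt_gain R) lexy).
  + exact: (meet_mono hsm (@lt_gain R) lexy).
  + exact: (join_mono hsm (@le_gain R) lexy).
  + exact: (meet_mono hsm (@le_gain R) lexy).
- rewrite equilibriumP; symmetry; exact: (fixed_no_deviation u (fun a b => a < b)).
- rewrite strict_equilibriumP; symmetry.
  exact: (fixed_no_deviation u (fun a b => a <= b)).
Qed.
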